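(* Let $p,q>0$ with $p\neq 1$, $q\neq 1$ and $\frac{\ln p}{\ln q}$ irrational. Let $f$ be a locally integrable function on $\mathbb{R}\setminus\{0\}$ such that $\int_x^{px} f(t)\,dt$ and $\int_x^{qx} f(t)\,dt$ are constant (independent of $x\in\mathbb{R}\setminus\{0\}$). Then there is a constant $c$ such that $f(t)=\frac{c}{t}$ for almost every $t\in\mathbb{R}\setminus\{0\}$. *)

From HB Require Import structures.
From mathcomp Require Import all_boot all_order all_algebra.
From mathcomp Require Import all_classical all_reals all_analysis.
Set Implicit Arguments. Unset Strict Implicit. Unset Printing Implicit Defensive.
Import Order.TTheory GRing.Theory Num.Theory.
Import numFieldNormedType.Exports.
Local Open Scope classical_set_scope.
Local Open Scope ring_scope.

Definition loc_integrable_punctured (R : realType) (f : R -> R) : Prop :=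
  forall K : set R, compact K -> K `<=` ~` [set 0] ->
    (@lebesgue_measure R).-integrable K (EFin \o f).

Definition oint (R : realType) (f : R -> R) (a b : R) : R :=
  if a <= b then Rintegral (@lebesgue_measure R) `[a, b] f
  else - Rintegral (@lebesgue_measure R) `[b, a] f.

From HB Require Import structures.
From mathcomp Require Import all_boot all_order all_algebra.
From mathcomp Require Import all_classical all_reals all_analysis.
From mathcomp Require Import ring lra.
Import Order.TTheory GRing.Theory Num.Theory.
Import numFieldNormedType.Exports.
Local Open Scope classical_set_scope.
Local Open Scope ring_scope.

(* On each half-line, the substitution x = x0 e^s turns G(s) = oint f x0 (x0 e^s)
   into a continuous function with G(s + ln p) = G(s) + Cp and G(s + ln q) = G(s) + Cq.
   Subtracting the linear function s Cp / ln p leaves a continuous function with period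
   ln p which drifts by a constant along ln q; boundedness forces the drift to vanish,
   and a continuous function with two incommensurable periods is constant. Hence
   oint f u v = Cp / ln p * ln (v / u) on each half-line, and Lebesgue's
   differentiation theorem gives f t = (Cp / ln p) / t almost everywhere. *)

Lemma floor_reduce {R : archiFieldType} [c : R] (t : R) : 0 < c ->
  exists k : int, 0 <= t - k%:~R * c < c.
Proof.
move=> c0; exists (Num.floor (t / c)).
have /andP[lo hi] := floor_itv (t / c); rewrite intrD in hi.
rewrite ler_pdivlMr // in lo; rewrite ltr_pdivrMr // in hi.
by apply/andP; split; lra.
Qed.

Definition is_period {R : realType} (h : R -> R) (t : R) := forall s, h (s + t) = h s.

Section Periods.
Context {R : realType} {h : R -> R}.

Lemma is_periodD t1 t2 : is_period h t1 -> is_period h t2 -> is_period h (t1 + t2).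
Proof. by move=> P1 P2 s; rewrite addrA P2 P1. Qed.

Lemma is_periodN t : is_period h t -> is_period h (- t).
Proof. by move=> Pt s; rewrite -[in RHS](subrK t s) Pt. Qed.

Lemma is_periodMz t (k : int) : is_period h t -> is_period h (k%:~R * t).
Proof.
move=> Pt; have Pn n : is_period h (n%:R * t).
  elim: n => [|n IH]; first by move=> s; rewrite mul0r addr0.
  by rewrite mulrSr mulrDl mul1r; apply: is_periodD.
by case: k => n; [exact: Pn | rewrite NegzE mulrNz mulNr; exact/is_periodN/Pn].
Qed.

Lemma is_period_norm t : is_period h t -> is_period h `|t|.
Proof. by move=> Pt; case: (ler0P t) => _ //; exact: is_periodN. Qed.

Let pos_periods := [set t | is_period h t /\ 0 < t].

Lemma least_period_generates [t0 t : R] : pos_periods t0 -> 0 < inf pos_periods ->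
  is_period h t -> exists k : int, t = k%:~R * inf pos_periods.
Proof.
move=> St0 c0 Pt; set c := inf pos_periods.
have hasinf : has_inf pos_periods by split; [exists t0 | exists 0 => ? [_ /ltW]].
have c_le x : pos_periods x -> c <= x by move=> Sx; exact: (ge_inf hasinf.2 Sx).
(* Some period t1 lies in [c, 2c); if t1 <> c, a period t2 in [c, t1) leaves the
   period t1 - t2 in (0, c). *)
have Pc : is_period h c.
  have [t1 St1 t1_lt] := inf_adherent c0 hasinf.
  have [<-|t1_neq] := eqVneq t1 c; first by case: St1.
  have ct1 : c < t1 by rewrite lt_neqAle eq_sym t1_neq c_le.
  have t1c_gt0 : 0 < t1 - c by rewrite subr_gt0.
  have [t2 St2 t2_lt] := inf_adherent t1c_gt0 hasinf.
  have : pos_periods (t1 - t2).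
    split; first by apply: is_periodD; [case: St1 | apply: is_periodN; case: St2].
    by move: t2_lt; rewrite addrC subrK subr_gt0.
  by move/c_le; have := c_le _ St2; lra.
have [k /andP[r_ge0 r_lt]] := floor_reduce t c0.
exists k; apply/eqP; rewrite -subr_eq0; apply/negPn/negP => r_neq0.
suff : c <= t - k%:~R * c by lra.
apply: c_le; split; last by rewrite lt_neqAle eq_sym r_neq0.
by apply: is_periodD => //; apply/is_periodN/is_periodMz.
Qed.

Lemma continuous_small_periods_const : continuous h ->
  (forall e, 0 < e -> exists2 t, is_period h t & 0 < t < e) -> forall s u, h s = h u.
Proof.
move=> hc small s u; apply/eqP/negPn/negP => hsu.
have eta : 0 < `|h u - h s| by rewrite normr_gt0 subr_eq0 eq_sym.
have /cvgrPdist_lt /(_ _ eta) /nbhs_ballP [d /= d0 near_u] := hc u.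
have [t Pt /andP[t0 td]] := small d d0.
have [k /andP[r_ge0 r_lt]] := floor_reduce (u - s) t0.
have : ball u d (s + k%:~R * t) by rewrite /ball /= ger0_norm; lra.
by move/near_u; rewrite /= is_periodMz // ltxx.
Qed.

Lemma incommensurable_periods_const [a b : R] : continuous h -> b != 0 ->
  ~ (exists r : rat, a / b = ratr r) -> is_period h a -> is_period h b ->
  forall s u, h s = h u.
Proof.
move=> hc b0 irr Pa Pb.
have Sb : pos_periods `|b| by split; [exact: is_period_norm | rewrite normr_gt0].
have hasinf : has_inf pos_periods by split; [exists `|b| | exists 0 => ? [_ /ltW]].
have [c0|c_le0] := ltrP 0 (inf pos_periods).
  have [m aE] := least_period_generates Sb c0 Pa.
  have [n bE] := least_period_generates Sb c0 Pb.
  have n0 : (n%:~R : R) != 0 by apply: contraNneq b0; rewrite bE => ->; rewrite mul0r.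
  case: irr; exists (m%:~R / n%:~R).
  by rewrite fmorph_div !rmorph_int aE bE -mulf_div divff ?mulr1 ?gt_eqF.
apply: continuous_small_periods_const => // e e0.
have [t [Pt t0] t_lt] := inf_adherent e0 hasinf.
by exists t => //; rewrite t0; lra.
Qed.

Lemma continuous_periodic_bounded [a : R] : continuous h -> a != 0 -> is_period h a ->
  exists m M, forall s, m <= h s <= M.
Proof.
move=> hc a0 Pa; have a_gt0 : 0 < `|a| by rewrite normr_gt0.
have hc_in : {within `[0, `|a|], continuous h} by exact: continuous_subspaceT.
have [sM _ le_hM] := EVT_max (ltW a_gt0) hc_in.
have [sm _ ge_hm] := EVT_min (ltW a_gt0) hc_in.
exists (h sm), (h sM) => s.
have [k /andP[r_ge0 r_lt]] := floor_reduce s a_gt0.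
have r_in : s - k%:~R * `|a| \in `[0, `|a|] by rewrite in_itv /= r_ge0 ltW.
have <- : h (s - k%:~R * `|a|) = h s.
  by rewrite -[in RHS](subrK (k%:~R * `|a|) s) is_periodMz //; exact: is_period_norm.
by rewrite ge_hm ?le_hM.
Qed.

Lemma periodic_drift_eq0 [a b d : R] : continuous h -> a != 0 -> is_period h a ->
  (forall s, h (s + b) = h s + d) -> d = 0.
Proof.
move=> hc a0 Pa hb; have [m [M bnd]] := continuous_periodic_bounded hc a0 Pa.
have hn n : h (n%:R * b) - h 0 = n%:R * d.
  elim: n => [|n IH]; first by rewrite !mul0r subrr.
  by rewrite !mulrSr !mulrDl !mul1r hb addrAC IH.
have drift_le n : n%:R * `|d| <= M - m.
  rewrite -normr_nat -normrM -hn ler_norml.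
  by have := bnd 0; have := bnd (n%:R * b); lra.
apply/eqP; rewrite -normr_eq0; apply/negPn/negP => d0.
have d_gt0 : 0 < `|d| by rewrite normr_gt0 -normr_eq0.
have Mm_ge0 : 0 <= (M - m) / `|d| by rewrite divr_ge0 // (le_trans _ (drift_le 0)) ?mul0r.
have := archi_boundP Mm_ge0; rewrite ltr_pdivrMr // => lt_drift.
by have := drift_le (Num.bound ((M - m) / `|d|)); lra.
Qed.

End Periods.

Lemma affine_of_incommensurable_shifts {R : realType} [g : R -> R] [a b A B : R] :
  continuous g -> a != 0 -> b != 0 -> ~ (exists r : rat, a / b = ratr r) ->
  (forall s, g (s + a) = g s + A) -> (forall s, g (s + b) = g s + B) ->
  forall s, g s = A / a * s + g 0.
Proof.
move=> gc a0 b0 irr ga gb.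
pose h s := g s - A / a * s.
have hc : continuous h.
  by move=> x; apply: continuousB; [exact: gc | apply: continuousZr; exact: cvg_id].
have Pa : is_period h a by move=> s; rewrite /h ga mulrDr divfK //; ring.
have hb s : h (s + b) = h s + (B - A / a * b) by rewrite /h gb mulrDr; ring.
have Pb : is_period h b.
  by move=> s; rewrite hb (periodic_drift_eq0 hc a0 Pa hb) addr0.
move=> s; have := incommensurable_periods_const hc b0 irr Pa Pb s 0.
by rewrite /h mulr0 subr0 => <-; ring.
Qed.

Lemma same_sign_between {R : realFieldType} [x0 x y t : R] :
  0 < x0 * x -> 0 < x0 * y -> x <= t <= y -> 0 < x0 * t.
Proof.
move=> hx hy /andP[xt ty]; have [x0_lt0|x0_gt0|x0E] := ltgtP x0 0.
- by rewrite nmulr_rgt0 // (le_lt_trans ty) // -(nmulr_rgt0 _ x0_lt0).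
- by rewrite pmulr_rgt0 // (lt_le_trans _ xt) // -(pmulr_rgt0 _ x0_gt0).
- by move: hx; rewrite x0E mul0r ltxx.
Qed.

Lemma same_sign_div_gt0 {R : realFieldType} [x0 x y : R] :
  0 < x0 * x -> 0 < x0 * y -> 0 < y / x.
Proof.
move=> hx hy; have x0_neq0 : x0 != 0 by apply: contraTneq hx => ->; rewrite mul0r ltxx.
have x_neq0 : x != 0 by apply: contraTneq hx => ->; rewrite mulr0 ltxx.
have -> : y / x = (x0 * y) / (x0 * x) by rewrite invfM mulrACA mulfV // mul1r.
exact: divr_gt0.
Qed.

Lemma Rintegral_itv_split {R : realType} [f : R -> R] [x y z : R] : x <= y -> y <= z ->
  lebesgue_measure.-integrable `[x, z] (EFin \o f) ->
  Rintegral lebesgue_measure `[x, z] f =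
  Rintegral lebesgue_measure `[x, y] f + Rintegral lebesgue_measure `[y, z] f.
Proof.
move=> xy yz ixz.
have := @Rintegral_itvB R f (BLeft x) (BRight z) y ixz.
rewrite !bnd_simp => /(_ xy yz) split_eq.
rewrite -[X in _ = _ + X]Rintegral_itv_obnd_cbnd; first by rewrite -split_eq subrKC.
by apply: integrableS ixz => //; apply: subset_itvScc; rewrite ?lexx.
Qed.

Lemma oint_sub {R : realType} [f : R -> R] [m x y : R] : m <= x -> m <= y ->
  lebesgue_measure.-integrable `[m, x] (EFin \o f) ->
  lebesgue_measure.-integrable `[m, y] (EFin \o f) ->
  oint f x y =
  Rintegral lebesgue_measure `[m, y] f - Rintegral lebesgue_measure `[m, x] f.
Proof.
move=> mx my imx imy; rewrite /oint; case: leP => xy.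
  by rewrite (Rintegral_itv_split mx xy imy) addrAC subrr add0r.
by rewrite (Rintegral_itv_split my (ltW xy) imx) opprD addNKr.
Qed.

Lemma is_derive_ln_div {R : realType} (lam : R) [u x : R] : 0 < x / u ->
  is_derive x 1 (fun y : R => lam * ln (y / u)) (lam / x).
Proof.
move=> xu.
have u_neq0 : u != 0 by apply: contraTneq xu => ->; rewrite invr0 mulr0 ltxx.
have x_neq0 : x != 0 by apply: contraTneq xu => ->; rewrite mul0r ltxx.
have d_div : is_derive x 1 (fun y : R => y / u) u^-1.
  by apply: is_derive_eq; rewrite /= scaler0 add0r [_%:A]mulr1.
have d_ln : is_derive x 1 ((@ln R) \o (fun y : R => y / u)) ((x / u)^-1 * u^-1).
  by apply: is_derive1_comp => //; exact: is_derive1_ln.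
apply: is_derive_eq.
by rewrite invf_div /GRing.scale /= mulrAC divff // mul1r.
Qed.

Section HalfLine.
Context {R : realType} {f : R -> R} {x0 : R}.
Hypothesis hf : loc_integrable_punctured f.

Lemma integrable_same_sign [x y : R] : 0 < x0 * x -> 0 < x0 * y ->
  lebesgue_measure.-integrable `[x, y] (EFin \o f).
Proof.
move=> hx hy; apply: hf; first exact: segment_compact.
move=> t /=; rewrite in_itv /= => /(same_sign_between hx hy) ht t0.
by move: ht; rewrite t0 mulr0 ltxx.
Qed.

Lemma oint_chasles [x y z : R] : 0 < x0 * x -> 0 < x0 * y -> 0 < x0 * z ->
  oint f x z = oint f x y + oint f y z.
Proof.
move=> hx hy hz; pose m := Num.min x (Num.min y z).
have hm : 0 < x0 * m by rewrite /m !minEle; repeat case: ifP.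
have [mx my mz] : [/\ m <= x, m <= y & m <= z].
  by rewrite /m !ge_min !lexx !orbT.
rewrite !(oint_sub (m := m)) ?integrable_same_sign //.
by rewrite [RHS]addrC addrA subrK.
Qed.

Lemma oint_continuous [y0 y : R] : 0 < x0 * y0 -> 0 < x0 * y ->
  {for y, continuous (oint f y0)}.
Proof.
move=> hy0 hy.
have [m [w [hm hw /andP[my yw]]]] :
    exists m w, [/\ 0 < x0 * m, 0 < x0 * w & m < y < w].
  have scale c : 0 < c -> 0 < x0 * (y * c) by move=> c0; rewrite mulrA mulr_gt0.
  have [y_lt0|y_gt0|yE] := ltgtP y 0.
  - by exists (y * 2), (y * 2^-1); split; rewrite ?scale ?invr_gt0 //; lra.
  - by exists (y * 2^-1), (y * 2); split; rewrite ?scale ?invr_gt0 //; lra.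
  - by move: hy; rewrite yE mulr0 ltxx.
pose F t := oint f y0 m + parameterized_integral lebesgue_measure m t f.
have F_cont : {for y, continuous F}.
  apply: continuousD; first exact: cst_continuous.
  apply: within_continuous_continuous (lt_trans my yw) _ _; last by rewrite in_itv /= my.
  apply: parameterized_integral_continuous; first exact: ltW (lt_trans my yw).
  exact: integrable_same_sign hm hw.
have F_near : \forall t \near y, F t = oint f y0 t.
  near=> t.
  have : t \in `]m, w[ by near: t; apply: near_in_itv; rewrite in_itv /= my.
  rewrite in_itv /= => /andP[mt tw].
  have ht : 0 < x0 * t by apply: same_sign_between hm hw _; rewrite !ltW.
  rewrite /F [RHS](oint_chasles hy0 hm ht); congr (_ + _).
  by rewrite /oint ltW.
rewrite /prop_for /continuous_at -(nbhs_singleton F_near).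
exact: cvg_trans (near_eq_cvg F_near) F_cont.
Unshelve. all: by end_near.
Qed.

Lemma oint_ln_of_dilations [p q Cp Cq u v : R] :
  0 < p -> 0 < q -> p != 1 -> q != 1 ->
  ~ (exists r : rat, ln p / ln q = ratr r) ->
  (forall x, x != 0 -> oint f x (p * x) = Cp) ->
  (forall x, x != 0 -> oint f x (q * x) = Cq) ->
  0 < x0 * u -> 0 < x0 * v -> oint f u v = Cp / ln p * ln (v / u).
Proof.
move=> p_gt0 q_gt0 p_neq1 q_neq1 irr hp hq hu hv.
have x0_neq0 : x0 != 0 by apply: contraTneq hu => ->; rewrite mul0r ltxx.
have u_neq0 : u != 0 by apply: contraTneq hu => ->; rewrite mulr0 ltxx.
have hx0 : 0 < x0 * x0 by rewrite -expr2 exprn_even_gt0 // x0_neq0 orbT.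
pose g s := oint f x0 (x0 * expR s).
have hexp s : 0 < x0 * (x0 * expR s) by rewrite mulrA mulr_gt0 // expR_gt0.
have g_cont : continuous g.
  move=> s; apply: (@continuous_comp _ _ _ (fun s => x0 * expR s) (oint f x0)).
    by apply: continuousM; [exact: cst_continuous | exact: continuous_expR].
  exact: oint_continuous hx0 (hexp s).
have g_shift r C : 0 < r -> (forall x, x != 0 -> oint f x (r * x) = C) ->
    forall s, g (s + ln r) = g s + C.
  move=> r_gt0 hr s; rewrite /g expRD lnK ?posrE //.
  have -> : x0 * (expR s * r) = r * (x0 * expR s) by ring.
  rewrite (oint_chasles hx0 (hexp s)) ?hr //; last by rewrite mulrCA mulr_gt0.
  by rewrite mulf_neq0 // gt_eqF // expR_gt0.
have lnp_neq0 : ln p != 0 by rewrite ln_eq0.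
have lnq_neq0 : ln q != 0 by rewrite ln_eq0.
have g_affine := affine_of_incommensurable_shifts g_cont lnp_neq0 lnq_neq0 irr
  (g_shift p Cp p_gt0 hp) (g_shift q Cq q_gt0 hq).
have oint_x0 x : 0 < x0 * x -> oint f x0 x = Cp / ln p * ln (x / x0) + g 0.
  move=> hx; rewrite -g_affine /g lnK ?posrE ?(same_sign_div_gt0 hx0 hx) //.
  by rewrite mulrC divfK.
have -> : ln (v / u) = ln (v / x0) - ln (u / x0).
  have -> : v / x0 = v / u * (u / x0) by rewrite mulrA divfK.
  by rewrite [ln (_ * (u / x0))]lnM ?posrE ?addrK ?(same_sign_div_gt0 hu hv)
    ?(same_sign_div_gt0 hx0 hu).
by have := oint_chasles hx0 hu hv; rewrite mulrBr !oint_x0 //; lra.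
Qed.

Lemma ae_eq_div_of_oint_ln [lam u v : R] :
  (forall a b, 0 < x0 * a -> 0 < x0 * b -> oint f a b = lam * ln (b / a)) ->
  0 < x0 * u -> 0 < x0 * v ->
  {ae lebesgue_measure, forall x, u < x < v -> f x = lam / x}.
Proof.
move=> hform hu hv; have iuv := integrable_same_sign hu hv.
pose psi := f \_ `[u, v].
have ipsi : lebesgue_measure.-integrable `[u, v] (EFin \o psi).
  by rewrite /psi -restrict_EFin; apply/integrable_restrict => //=; rewrite setIid.
have := lebesgue_differentiation (integrable_locally (measurable_itv `[u, v]) iuv).
apply: filterS; first exact: (ae_filter_ringOfSetsType lebesgue_measure).
move=> x psi_pt /andP[ux xv].
have ux_bnd : (BLeft u < BRight x)%E by rewrite /= lte_fin.
have psi_x : psi x = f x by rewrite /psi patchE mem_set //= in_itv /= !ltW.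
rewrite -psi_x; have [_ <-] := FTC1_lebesgue_pt xv ipsi ux_bnd psi_pt.
have hx : 0 < x0 * x by apply: same_sign_between hu hv _; rewrite !ltW.
have near_x : \forall y \near x,
    \int[lebesgue_measure]_(t in `[u, y]) psi t = lam * ln (y / u).
  near=> y.
  have : y \in `]u, v[ by near: y; apply: near_in_itv; rewrite in_itv /= ux.
  rewrite in_itv /= => /andP[uy yv].
  have hy : 0 < x0 * y by apply: same_sign_between hu hv _; rewrite !ltW.
  rewrite -hform // /oint ltW //; apply: eq_Rintegral => t.
  rewrite inE /= in_itv /= => /andP[ut ty].
  by rewrite /psi patchE mem_set //= in_itv /= ut (le_trans ty (ltW yv)).
rewrite derive1E (near_eq_derive _ near_x).
have d_ln := is_derive_ln_div lam (same_sign_div_gt0 hu hx).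
exact: (@derive.derive_val _ _ _ _ _ _ _ d_ln).
Unshelve. all: by end_near.
Qed.

End HalfLine.

Lemma ae_punctured_of_annuli {R : realType} (P : R -> Prop) :
  (forall u v, 0 < u -> u < v -> {ae lebesgue_measure, forall x, u < `|x| < v -> P x}) ->
  {ae lebesgue_measure, forall x, x != 0 -> P x}.
Proof.
move=> hP.
have annulus n : {ae lebesgue_measure, forall x, n.+1%:R^-1 < `|x| < n.+2%:R -> P x}.
  apply: hP; first by rewrite invr_gt0.
  by apply: (@le_lt_trans _ _ 1); rewrite ?invf_le1 ?ler1n ?ltr1n.
apply: filterS (ae_foralln annulus) => x Px x_neq0.
have x_gt0 : 0 < `|x| by rewrite normr_gt0.
have xV_gt0 : 0 < `|x|^-1 by rewrite invr_gt0.
have [n x_lt] : exists n : nat, `|x| + `|x|^-1 < n%:R.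
  by exists (Num.bound (`|x| + `|x|^-1)); rewrite archi_boundP // ltW ?addr_gt0.
apply: (Px n); rewrite invf_plt ?posrE // -addn2 -addn1 !natrD.
by apply/andP; split; lra.
Qed.

Theorem mainTheorem4 (R : realType) (p q : R) (f : R -> R) :
  0 < p -> 0 < q -> p != 1 -> q != 1 ->
  ~ (exists r : rat, ln p / ln q = ratr r) ->
  loc_integrable_punctured f ->
  (exists Cp : R, forall x : R, x != 0 -> oint f x (p * x) = Cp) ->
  (exists Cq : R, forall x : R, x != 0 -> oint f x (q * x) = Cq) ->
  exists c : R, {ae (@lebesgue_measure R), forall t : R, t != 0 -> f t = c / t}.
Proof.
move=> p_gt0 q_gt0 p_neq1 q_neq1 irr hf [Cp hp] [Cq hq].
exists (Cp / ln p).
have halfline_ae (x0 u v : R) : 0 < x0 * u -> 0 < x0 * v ->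
    {ae lebesgue_measure, forall x, u < x < v -> f x = Cp / ln p / x}.
  move=> hu hv; apply: (ae_eq_div_of_oint_ln hf _ hu hv) => a b ha hb.
  exact: (oint_ln_of_dilations hf p_gt0 q_gt0 p_neq1 q_neq1 irr hp hq ha hb).
apply: ae_punctured_of_annuli => u v u_gt0 uv.
have v_gt0 := lt_trans u_gt0 uv.
have := halfline_ae 1 u v; rewrite !mul1r => /(_ u_gt0 v_gt0) ae_pos.
have := halfline_ae (-1) (-v) (-u); rewrite !mulN1r !opprK => /(_ v_gt0 u_gt0) ae_neg.
apply: (@filterS2 _ _ (ae_filter_ringOfSetsType lebesgue_measure) _ _ _ _ ae_pos ae_neg).
move=> x fpos fneg; have [x_ge0|x_lt0] := leP 0 x.
- by rewrite ger0_norm // => /fpos.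
- by rewrite ltr0_norm // => uxv; apply: fneg; lra.
Qed.
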